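(* Let $T\in\mathbb{N}$, $\alpha\in(0,1)$, $\delta\in(0,1)$, $\lambda=\sqrt T$, and let $\mathcal{H}=\{k/(H-1):k=0,\dots,H-1\}$ with $H\ge2$. Run the ExAUL algorithm (described in the context) with $\eta=2\gamma=\sqrt{\ln|\mathcal{H}|/T}$ against an adaptive adversary. Then, with probability at least $1-\delta$ over the learner's randomization, $$\frac1T\mathcal{R}_T^{\mathrm{FDR}}\le\frac{1-\mathrm{Ineff}_T}{\sqrt T}+\Big(1+\frac1{\sqrt T}\Big)\Big(4\sqrt{\frac{\ln|\mathcal{H}|}{T}}+\Big(\frac1T+\sqrt{\frac{1}{T\ln|\mathcal{H}|}}\Big)\ln\frac2\delta\Big).$$
   Context: Protocol. For $t=1,\dots,T$: an adaptive adversary chooses an input $\mathbf{x}_t$ (determining a score $f_t=f(\mathbf{x}_t,G(\mathbf{x}_t))\in[0,1)$ for a fixed generator $G$ and fixed scoring function $f$) and a feedback value $c_t\in[0,1]$ for the answer $G(\mathbf{x}_t)$; these may depend on the learner's past choices $\tau_1,\dots,\tau_{t-1}$ but not on $\tau_t$. The learner picks $\tau_t\in\mathcal{H}$; it answers $G(\mathbf{x}_t)$ if $f_t\ge\tau_t$ and outputs IDK otherwise; it observes $f_t$ and, as partial feedback, $e_t$, which equals $c_t$ when it answers (when it abstains, the losses below do not depend on $c_t$). Losses: for $\tau\in\mathcal{H}$, $a_t(\tau)=\mathbf{1}(f_t<\tau)$, $d_t(\tau,\alpha)=\mathbf{1}(f_t\ge\tau)c_t-\alpha\mathbf{1}(f_t\ge\tau)+\alpha$,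 $\ell_t(\tau)=\frac{a_t(\tau)+\lambda d_t(\tau,\alpha)}{1+\lambda}\in[0,1]$. ExAUL algorithm (parameters $\eta,\gamma>0$): $w_1(\tau)=1/|\mathcal{H}|$. At round $t$: $p_t(\tau)=w_t(\tau)/\sum_{\tau'}w_t(\tau')$; draw $\tau_t\sim p_t$; observe $f_t$ and $e_t$; define the unlocked set $\mathcal{H}_t(\tau')=\{\tau\in\mathcal{H}:\tau\le f_t\}$ if $f_t\ge\tau'$ and $\mathcal{H}_t(\tau')=\{\tau\in\mathcal{H}:\tau>f_t\}$ otherwise (for $\tau\in\mathcal{H}_t(\tau_t)$ the loss $\ell_t(\tau)$ is computable from $e_t$); set for all $\tau\in\mathcal{H}$ $$\tilde\ell_t(\tau)=\frac{\ell_t(\tau)\,\mathbf{1}(\tau\in\mathcal{H}_t(\tau_t))}{\gamma+\sum_{\bar\tau\in\mathcal{H}_t(\tau_t)}\mathbf{1}(\tau\in\mathcal{H}_t(\bar\tau))\,p_t(\bar\tau)};$$ update $w_{t+1}(\tau)\propto\exp(-\eta\sum_{s=1}^t\tilde\ell_s(\tau))$. Metrics: $\mathcal{R}_T^{\mathrm{FDR}}=\sum_{t=1}^T[\mathbf{1}(f_t\ge\tau_t)c_t-\alpha\mathbf{1}(f_t\ge\tau_t)]$ and $\mathrm{Ineff}_T=\frac1T\sum_{t=1}^T\mathbf{1}(f_t<\tau_t)$. *)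

From mathcomp Require Import all_boot all_order all_algebra.
From mathcomp Require Import all_classical all_reals all_analysis.
Set Implicit Arguments. Unset Strict Implicit. Unset Printing Implicit Defensive.
Import Order.TTheory GRing.Theory Num.Theory.
Local Open Scope ring_scope.

Definition ind (R : realType) (b : bool) : R := if b then 1 else 0.

Definition thr (R : realType) (H : nat) (k : 'I_H) : R := k%:R / (H.-1)%:R.

(* l_t(tau) = (a_t(tau) + lam * d_t(tau, alpha)) / (1 + lam), with score f, feedback c *)
Definition loss (R : realType) (lam alpha f c tau : R) : R :=
  (ind R (f < tau) + lam * (ind R (tau <= f) * c - alpha * ind R (tau <= f) + alpha))
  / (1 + lam).

Definition unlocked (R : realType) (H : nat) (f : R) (tau' k : 'I_H) : bool :=
  if thr R tau' <= f then thr R k <= f else f < thr R k.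

Definition ltil (R : realType) (H : nat) (lam alpha gam f c : R)
  (p : 'I_H -> R) (chosen k : 'I_H) : R :=
  loss lam alpha f c (thr R k) * ind R (unlocked f chosen k) /
  (gam + \sum_(b : 'I_H | unlocked f chosen b) ind R (unlocked f b k) * p b).

Definition pdist (R : realType) (H : nat) (eta : R) (L : 'I_H -> R) (k : 'I_H) : R :=
  expR (- eta * L k) / \sum_(j : 'I_H) expR (- eta * L j).

(* Run of ExAUL against an adaptive adversary adv (mapping the learner's past
   choices tau_1..tau_{t-1} to (f_t, c_t)), along the sequence of learner
   choices [rest].
   Returns, for each round, (p_t(tau_t), f_t, c_t, tau_t). *)
Fixpoint exaul_run (R : realType) (H : nat) (lam alpha eta gam : R)
  (adv : seq 'I_H -> R * R) (L : 'I_H -> R) (h rest : seq 'I_H)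
  : seq (R * R * R * 'I_H) :=
  match rest with
  | [::] => [::]
  | x :: r =>
      let p := pdist eta L in
      let f := (adv h).1 in let c := (adv h).2 in
      (p x, f, c, x) ::
        exaul_run lam alpha eta gam adv
          (fun k => L k + ltil lam alpha gam f c p x k) (rcons h x) r
  end.

Definition traj (R : realType) (H : nat) (lam alpha eta gam : R)
  (adv : seq 'I_H -> R * R) (taus : seq 'I_H) :=
  exaul_run lam alpha eta gam adv (fun _ => 0) [::] taus.

Definition seq_prob (R : realType) (H : nat) (lam alpha eta gam : R)
  (adv : seq 'I_H -> R * R) (taus : seq 'I_H) : R :=
  \prod_(e <- traj lam alpha eta gam adv taus) e.1.1.1.

Definition fdr_regret (R : realType) (H : nat) (lam alpha eta gam : R)
  (adv : seq 'I_H -> R * R) (taus : seq 'I_H) : R :=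
  \sum_(e <- traj lam alpha eta gam adv taus)
     (ind R (thr R e.2 <= e.1.1.2) * e.1.2 - alpha * ind R (thr R e.2 <= e.1.1.2)).

Definition ineff (R : realType) (H : nat) (T : nat) (lam alpha eta gam : R)
  (adv : seq 'I_H -> R * R) (taus : seq 'I_H) : R :=
  (T%:R)^-1 * \sum_(e <- traj lam alpha eta gam adv taus) ind R (e.1.1.2 < thr R e.2).

From Pilot Require Import Defs.
From mathcomp Require Import all_boot all_order all_algebra.
From mathcomp Require Import all_classical all_reals all_analysis.
From mathcomp Require Import ring lra.
Import Order.TTheory GRing.Theory Num.Theory.
Set Implicit Arguments. Unset Strict Implicit. Unset Printing Implicit Defensive.
Local Open Scope ring_scope.

(* Compare the learner with the threshold 1, which always abstains because scores are < 1.
   The loss of a threshold only depends on whether it answers, and with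
   S = sum_t (l_t(tau_t) - l_t(1)) one has (1 + lam) S = T Ineff_T - T + lam R_T^FDR,
   so it suffices to show eta S <= ln |H| + 2 eta^2 T + ln (1/delta) with probability
   1 - delta.  The potential Phi(L) = ln (sum_k exp (- eta L(k))) + eta L(1) of the cumulative
   estimated losses is nonnegative with Phi(0) = ln |H|, hence eta S <= sum_t X_t + ln |H| for
   X_t = eta (l_t(tau_t) - l_t(1)) + Phi_(t+1) - Phi_t.  The thresholds unlocked by tau_t are
   those on the same side of f_t as tau_t, so the conditional mean of exp X_t is a two-point
   expression which the implicit exploration gam = eta / 2 keeps below exp (2 eta^2) when
   eta <= 1.  Thus E [exp (sum_t X_t - 2 eta^2 T)] <= 1 and Markov's inequality concludes;
   for eta > 1 the bound holds surely since S <= T. *)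

Section ExpBounds.
Variable R : realType.
Implicit Types a b s u x y z eta : R.

Lemma expR_pade_le y : 0 <= y -> (2 - y) * expR y <= 2 + y.
Proof.
move=> y0; pose g : R -> R := ((cst 2 - id) * expR - (cst 2 + id))%R.
have dg (t : R) : is_derive t (1 : R) g ((1 - t) * expR t - 1).
  by apply: is_derive_eq; rewrite /= !fctE /= /GRing.scale /=; lra.
have : g y <= g 0.
  apply: (@ler0_derive1_nincry R g 0) => //.
  - move=> t _; rewrite derive1E derive_val subr_le0.
    have := expR_ge1Dx (- t).
    by rewrite expRN -div1r ler_pdivlMr ?expR_gt0 //; lra.
  - by apply: derivable_within_continuous => t _; rewrite /g; apply: ex_derive.
by rewrite /g !fctE /= expR0 subr0 addr0 mulr1 subrr subr_le0.
Qed.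

Lemma expRN_le_quad z : 0 <= z -> expR (- z) <= 1 - z + z ^+ 2 / 2.
Proof.
move=> z0; pose g : R -> R := ((cst 1 - id + (id * id) * cst (2^-1)) * expR)%R.
have dg (t : R) : is_derive t (1 : R) g ((t * t / 2) * expR t).
  by apply: is_derive_eq; rewrite /= !fctE /= /GRing.scale /=; lra.
have : g 0 <= g z.
  apply: (@ger0_derive1_ndecry R g 0) => //.
  - move=> t _; rewrite derive1E derive_val.
    by rewrite mulr_ge0 ?expR_ge0 // -expr2 divr_ge0 ?sqr_ge0.
  - by apply: derivable_within_continuous => t _; rewrite /g; apply: ex_derive.
rewrite /g !fctE /= expR0 mul0r mul0r addr0 subr0 mulr1 -expr2.
by rewrite expRN -[(expR z)^-1]div1r ler_pdivrMr ?expR_gt0.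
Qed.

Lemma expR_le_1Dx_sqr s : s <= 1 -> expR s <= 1 + s + s ^+ 2.
Proof.
move=> s1; have [s0|s0] := lerP 0 s.
  rewrite -(@ler_pM2l _ (2 - s)) ?subr_gt0; last lra.
  by apply: le_trans (expR_pade_le s0) _; rewrite expr2; nra.
have ns : 0 <= - s by lra.
have := expRN_le_quad ns; rewrite opprK sqrrN => /le_trans -> //.
by have := sqr_ge0 s; lra.
Qed.

Lemma mulr_expR_IX_le eta u b : 0 < eta -> 0 <= u -> 0 <= b <= 1 ->
  u * expR (eta * (b / (eta / 2 + u))) <= u + eta * b.
Proof.
move=> eta0 u0 /andP[b0 b1].
have [->|u_neq0] := eqVneq u 0; first by rewrite mul0r add0r mulr_ge0 // ltW.
set w := eta * (b / (eta / 2 + u)).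
have wE : w * (eta / 2 + u) = eta * b by rewrite /w mulrA divfK // gt_eqF //; lra.
have w0 : 0 <= w by rewrite /w mulr_ge0 ?divr_ge0 // ?ltW //; lra.
have w2 : w < 2 by nra.
rewrite -(@ler_pM2r _ (2 - w)) ?subr_gt0 // -mulrA [expR w * _]mulrC.
apply: le_trans (ler_wpM2l u0 (expR_pade_le w0)) _.
have : 0 <= (1 - b) * eta * w by rewrite mulr_ge0 // mulr_ge0 ?subr_ge0 // ltW.
nra.
Qed.

Lemma abstain_term_le eta x u b : 0 < eta -> 0 <= x -> 0 <= u -> x + u = 1 -> 0 <= b <= 1 ->
  u * ((u * expR (- eta * (b / (eta / 2 + u))) + x) * expR (eta * (b / (eta / 2 + u))))
  <= u + x * (eta * b).
Proof.
move=> eta0 x0 u0 xu b01.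
rewrite mulrDl -mulrA -expRD mulNr addNr expR0 mulr1 mulrDr mulrCA.
have := ler_wpM2l x0 (mulr_expR_IX_le eta0 u0 b01).
have : u * u + u * x = u by rewrite -mulrDr addrC xu mulr1.
lra.
Qed.

Lemma answer_term_le eta x u a b : 0 < eta <= 1 -> 0 <= x -> 0 <= u -> x + u = 1 ->
  0 <= a <= 1 -> 0 <= b <= 1 ->
  x * (expR (eta * (a - b)) * (x * expR (- eta * (a / (eta / 2 + x))) + u)) + x * (eta * b)
  <= x + 2 * eta ^+ 2.
Proof.
move=> /andP[eta0 eta1] x0 u0 xu /andP[a0 a1] /andP[b0 b1].
rewrite [- eta * _]mulNr [eta * (a / _)]mulrA; set z := eta * a / (eta / 2 + x).
have zE : z * (eta / 2 + x) = eta * a by rewrite /z divfK // gt_eqF //; lra.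
have z0 : 0 <= z by rewrite /z divr_ge0 ?mulr_ge0 // ?ltW //; lra.
have xz0 : 0 <= x * z by rewrite mulr_ge0.
have xz_le : x * z <= eta * a by nra.
have z2 : z <= 2 by nra.
set s := eta * (a - b) - x * (z - z ^+ 2 / 2).
have s_ge : - (eta * b) <= s.
  rewrite /s expr2; have : 0 <= x * (z * z) by rewrite mulr_ge0 // mulr_ge0.
  nra.
have s_le : s <= eta * a - eta * b.
  rewrite /s expr2; have : 0 <= x * z * (2 - z) by rewrite mulr_ge0 // subr_ge0.
  nra.
have mix : x * expR (- z) + u <= expR (- (x * (z - z ^+ 2 / 2))).
  apply: le_trans (expR_ge1Dx _); have := ler_wpM2l x0 (expRN_le_quad z0).
  rewrite expr2; nra.
have answer : x * (expR (eta * (a - b)) * (x * expR (- z) + u)) <= x * (1 + s + s ^+ 2).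
  apply: (ler_wpM2l x0); apply: le_trans (ler_wpM2l (expR_ge0 _) mix) _.
  by rewrite -expRD expR_le_1Dx_sqr //; nra.
have s_sqr : x * s ^+ 2 <= eta ^+ 2.
  have : s ^+ 2 <= eta ^+ 2.
    have : 0 <= eta + s by nra.
    have : 0 <= eta - s by nra.
    rewrite !expr2; nra.
  have := sqr_ge0 s; nra.
have s_lin : x * s + x * (eta * b) <= eta ^+ 2.
  have -> : x * s + x * (eta * b) = x * z * (eta / 2) + (x * z) ^+ 2 / 2.
    rewrite /s !expr2; have : x * (eta * a) = x * (z * (eta / 2 + x)) by rewrite zE.
    lra.
  have xz_eta : x * z <= eta by nra.
  have : x * z * (x * z) <= eta * eta by nra.
  rewrite !expr2; nra.
lra.
Qed.

(* [x] and [u] are the masses of the answering and abstaining thresholds, [a] and [b] their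
   losses. *)
Lemma two_cell_mgf_le eta x u a b : 0 < eta <= 1 -> 0 <= x -> 0 <= u -> x + u = 1 ->
  0 <= a <= 1 -> 0 <= b <= 1 ->
  x * (expR (eta * (a - b)) * (x * expR (- eta * (a / (eta / 2 + x))) + u)) +
  u * ((u * expR (- eta * (b / (eta / 2 + u))) + x) * expR (eta * (b / (eta / 2 + u))))
  <= expR (2 * eta ^+ 2).
Proof.
move=> eta01 x0 u0 xu a01 b01; apply: le_trans (expR_ge1Dx _).
have := answer_term_le eta01 x0 u0 xu a01 b01.
case/andP: eta01 => eta0 _; have := abstain_term_le eta0 x0 u0 xu b01.
lra.
Qed.
End ExpBounds.

Lemma sumr_tuple_cons (V : nmodType) (T : finType) (m : nat) (F : m.+1.-tuple T -> V) :
  \sum_(t : m.+1.-tuple T) F t = \sum_(x : T) \sum_(t : m.-tuple T) F [tuple of x :: t].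
Proof.
rewrite pair_big (reindex (fun p : T * m.-tuple T => [tuple of p.1 :: p.2])) //=.
exists (fun t : m.+1.-tuple T => (thead t, [tuple of behead t])).
  by move=> [x t] _; congr pair; apply: val_inj.
by move=> t _; rewrite [in RHS](tuple_eta t).
Qed.

Lemma sumr_tuple0 (V : nmodType) (T : finType) (F : 0.-tuple T -> V) :
  \sum_(t : 0.-tuple T) F t = F [tuple].
Proof. by rewrite (big_pred1 [tuple]) // => t; apply/esym/eqP; exact: tuple0. Qed.

Lemma markov_finite (R : realFieldType) (I : finType) (p Z : I -> R) (P : pred I) (delta : R) :
  (forall i, 0 <= p i) -> (forall i, 0 <= Z i) -> \sum_i p i = 1 ->
  \sum_i p i * Z i <= 1 -> 0 < delta ->
  (forall i, delta * Z i < 1 -> P i) -> 1 - delta <= \sum_(i | P i) p i.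
Proof.
move=> p0 Z0 p1 EZ delta0 hP.
suff : \sum_(i | ~~ P i) p i <= delta by move: p1; rewrite (bigID P) /=; lra.
apply: le_trans (_ : \sum_(i | ~~ P i) p i * (delta * Z i) <= _).
  apply: ler_sum => i /negP nPi; rewrite -[leLHS]mulr1 ler_wpM2l //.
  by rewrite leNgt; apply: contra_notN nPi => /hP.
apply: le_trans (_ : \sum_i p i * (delta * Z i) <= _).
  by rewrite [leRHS](bigID P) /= lerDr sumr_ge0 // => i _; rewrite !mulr_ge0 // ltW.
by under eq_bigr do rewrite mulrCA; rewrite -mulr_sumr ler_piMr // ltW.
Qed.

Section ExaulRun.
Variables (R : realType) (n : nat) (lam alpha eta gam : R) (adv : seq 'I_n.+1 -> R * R).
Hypotheses (n_gt0 : (0 < n)%N) (lam_ge0 : 0 <= lam) (alpha01 : 0 <= alpha <= 1).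
Hypothesis adv_range : forall h, (0 <= (adv h).1 < 1) && (0 <= (adv h).2 <= 1).

Implicit Types (L : 'I_n.+1 -> R) (h r : seq 'I_n.+1) (x k : 'I_n.+1) (f c : R).

Local Notation round := (R * R * R * 'I_n.+1)%type.
Local Notation run := (exaul_run lam alpha eta gam adv).

Definition admissible (e : round) : bool := (0 <= e.1.1.2 < 1) && (0 <= e.1.2 <= 1).

(* [ord_max] is the comparator threshold 1, which always abstains since scores are < 1. *)
Definition loss_gap (e : round) : R :=
  loss lam alpha e.1.1.2 e.1.2 (thr R e.2) - loss lam alpha e.1.1.2 e.1.2 (thr R (@ord_max n)).

Definition wsum L : R := \sum_j expR (- eta * L j).

Definition potential L : R := ln (wsum L) + eta * L (@ord_max n).

Definition next_loss L h x : 'I_n.+1 -> R :=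
  fun k => L k + ltil lam alpha gam (adv h).1 (adv h).2 (pdist eta L) x k.

Definition excess L h x : R :=
  eta * loss_gap (pdist eta L x, (adv h).1, (adv h).2, x)
  + (potential (next_loss L h x) - potential L).

Fixpoint excess_sum L h r : R :=
  if r is x :: r' then excess L h x + excess_sum (next_loss L h x) (rcons h x) r' else 0.

Lemma exaul_run_cons L h x r :
  run L h (x :: r)
  = (pdist eta L x, (adv h).1, (adv h).2, x) :: run (next_loss L h x) (rcons h x) r.
Proof. by []. Qed.

Lemma size_exaul_run L h r : size (run L h r) = size r.
Proof. by elim: r L h => [|x r IH] L h //=; rewrite IH. Qed.

Lemma exaul_run_admissible L h r : all admissible (run L h r).
Proof. by elim: r L h => [|x r IH] L h //=; rewrite [admissible _]adv_range IH. Qed.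

Lemma thr_ord_max_gt f : f < 1 -> (thr R (@ord_max n) <= f) = false.
Proof. by move=> f1; rewrite /thr /= divff ?pnatr_eq0 -?lt0n // leNgt f1. Qed.

Lemma wsum_gt0 L : 0 < wsum L.
Proof.
by rewrite /wsum (bigD1 ord0) //= ltr_pwDl ?expR_gt0 // sumr_ge0 // => i _; exact: expR_ge0.
Qed.

Lemma potential_ge0 L : 0 <= potential L.
Proof.
have : expR (- eta * L ord_max) <= wsum L.
  by rewrite /wsum (bigD1 ord_max) //= lerDl sumr_ge0 // => i _; exact: expR_ge0.
rewrite -ler_ln ?posrE ?expR_gt0 ?wsum_gt0 // expRK /potential mulNr; lra.
Qed.

Lemma potential0 : potential (fun=> 0) = ln n.+1%:R.
Proof. by rewrite /potential /wsum /= !mulr0 expR0 addr0 sumr_const card_ord. Qed.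

Lemma pdist_ge0 L k : 0 <= pdist eta L k.
Proof. by rewrite /pdist divr_ge0 ?expR_ge0 // ltW // wsum_gt0. Qed.

Lemma pdist_sum1 L : \sum_k pdist eta L k = 1.
Proof. by rewrite /pdist -mulr_suml divff // gt_eqF // (wsum_gt0 L). Qed.

Lemma run_prob_ge0 L h r : 0 <= \prod_(e <- run L h r) e.1.1.1.
Proof.
by elim: r L h => [|x r IH] L h; rewrite ?big_nil // exaul_run_cons big_cons mulr_ge0 ?pdist_ge0.
Qed.

Lemma sum_run_prob m L h : \sum_(t : m.-tuple 'I_n.+1) \prod_(e <- run L h t) e.1.1.1 = 1.
Proof.
elim: m L h => [|m IH] L h; first by rewrite sumr_tuple0 big_nil.
rewrite sumr_tuple_cons -[RHS](pdist_sum1 L); apply: eq_bigr => x _.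
under eq_bigr do rewrite exaul_run_cons big_cons.
by rewrite -mulr_sumr IH mulr1.
Qed.

Lemma loss_gap_le_excess_sum L h r :
  eta * \sum_(e <- run L h r) loss_gap e <= excess_sum L h r + potential L.
Proof.
elim: r L h => [|x r IH] L h; first by rewrite big_nil mulr0 add0r potential_ge0.
by rewrite exaul_run_cons big_cons /= /excess mulrDr; have := IH (next_loss L h x) (rcons h x); lra.
Qed.

Lemma mean_expR_excess_sum_le1 c :
  (forall L h, \sum_x pdist eta L x * expR (excess L h x) <= expR c) ->
  forall m L h, \sum_(t : m.-tuple 'I_n.+1)
    (\prod_(e <- run L h t) e.1.1.1) * expR (excess_sum L h t - m%:R * c) <= 1.
Proof.
move=> excess_le m; elim: m => [|m IH] L h.
  by rewrite sumr_tuple0 big_nil mul0r subr0 expR0 mulr1.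
rewrite sumr_tuple_cons.
apply: le_trans (_ : \sum_x pdist eta L x * expR (excess L h x - c) <= 1); last first.
  under eq_bigr do rewrite expRB mulrA.
  by rewrite -mulr_suml ler_pdivrMr ?expR_gt0 // mul1r.
apply: ler_sum => x _.
under eq_bigr do rewrite exaul_run_cons big_cons /= -nat1r mulrDl mul1r opprD addrACA expRD mulrACA.
by rewrite -mulr_sumr; apply: ler_piMr (IH _ _); rewrite mulr_ge0 ?pdist_ge0 ?expR_ge0.
Qed.

(* A threshold answers iff it lies at or below the score f, and its loss only depends on this
   side of f; the unlocked set of the chosen threshold is exactly its side. *)
Definition side_loss c (b : bool) : R :=
  if b then lam * c / (1 + lam) else (1 + lam * alpha) / (1 + lam).

Definition side_mass (p : 'I_n.+1 -> R) f (b : bool) : R := \sum_(k | (thr R k <= f) == b) p k.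

Lemma lossE f c tau : loss lam alpha f c tau = side_loss c (tau <= f).
Proof.
by rewrite /loss /side_loss ltNge; case: (tau <= f); rewrite /ind /=; congr (_ / _); ring.
Qed.

Lemma side_loss_ge0_le1 c b : 0 <= c <= 1 -> 0 <= side_loss c b <= 1.
Proof.
move: alpha01 (lam_ge0) => /andP[al0 al1] lam0 /andP[c0 c1]; have lam1 : 0 < 1 + lam by lra.
by rewrite /side_loss; case: b; rewrite divr_ge0 ?ler_pdivrMr ?mul1r //=; nra.
Qed.

Lemma unlockedE f x k : Defs.unlocked f x k = ((thr R k <= f) == (thr R x <= f)).
Proof. by rewrite /Defs.unlocked; case: (thr R x <= f); rewrite ?eqb_id // eqbF_neg -ltNge. Qed.

Lemma ltil_sideE f c p x k : ltil lam alpha gam f c p x k =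
  if (thr R k <= f) == (thr R x <= f)
  then side_loss c (thr R x <= f) / (gam + side_mass p f (thr R x <= f)) else 0.
Proof.
rewrite /ltil unlockedE lossE; case: eqP => [side_k|_]; last by rewrite /ind mulr0 mul0r.
rewrite /ind mulr1 side_k /side_mass; congr (_ / (_ + _)); apply: eq_big => j.
  by rewrite unlockedE.
by rewrite unlockedE => /eqP side_j; rewrite unlockedE side_j side_k eqxx mul1r.
Qed.

Lemma sum_side_mass p f (G : bool -> R) :
  \sum_k p k * G (thr R k <= f) = side_mass p f true * G true + side_mass p f false * G false.
Proof.
rewrite (bigID (fun k => thr R k <= f)) /side_mass !mulr_suml; congr (_ + _).
  by apply: eq_big => [k|k /= ->]; rewrite ?eqb_id.
by apply: eq_big => [k|k /= /negbTE ->]; rewrite ?eqbF_neg.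
Qed.

Lemma sum_mgf_ltil f c p x (s := thr R x <= f) :
  \sum_k p k * expR (- eta * ltil lam alpha gam f c p x k) =
  side_mass p f s * expR (- eta * (side_loss c s / (gam + side_mass p f s)))
  + side_mass p f (~~ s).
Proof.
under eq_bigr do rewrite ltil_sideE -/s.
rewrite (sum_side_mass p f (fun b => expR (- eta * (if b == s
  then side_loss c s / (gam + side_mass p f s) else 0)))).
by rewrite /s; case: (thr R x <= f); rewrite /= mulr0 expR0 mulr1 // addrC.
Qed.

Lemma wsum_next L (l : 'I_n.+1 -> R) :
  wsum (fun k => L k + l k) = wsum L * \sum_k pdist eta L k * expR (- eta * l k).
Proof.
rewrite mulr_sumr; apply: eq_bigr => k _; rewrite /pdist mulrDr expRD mulrA mulrCA.
by rewrite mulfV ?mulr1 // gt_eqF // wsum_gt0.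
Qed.

Lemma expR_excess L h x (f := (adv h).1) (c := (adv h).2) (p := pdist eta L) :
  expR (excess L h x) = expR (eta * loss_gap (p x, f, c, x))
    * (\sum_k p k * expR (- eta * ltil lam alpha gam f c p x k))
    * expR (eta * ltil lam alpha gam f c p x ord_max).
Proof.
have W0 := wsum_gt0 L; have W'E := wsum_next L (ltil lam alpha gam f c p x).
rewrite /excess /potential /next_loss -/f -/c -/p.
set W' := wsum _ in W'E *; set M := \sum_k _ in W'E *.
have -> : eta * loss_gap (p x, f, c, x)
    + (ln W' + eta * (L ord_max + ltil lam alpha gam f c p x ord_max)
       - (ln (wsum L) + eta * L ord_max))
  = eta * loss_gap (p x, f, c, x) + (ln W' - ln (wsum L))
    + eta * ltil lam alpha gam f c p x ord_max by ring.
rewrite expRD expRD expRB !lnK ?posrE ?W0 //; last exact: wsum_gt0.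
by rewrite W'E [wsum L * M]mulrC mulfK ?gt_eqF.
Qed.

Lemma excess_mgf_le L h : 0 < eta <= 1 -> gam = eta / 2 ->
  \sum_x pdist eta L x * expR (excess L h x) <= expR (2 * eta ^+ 2).
Proof.
move=> eta01 gamE; have /andP[/andP[_ f1] c01] := adv_range h.
set f := (adv h).1; set c := (adv h).2; set p := pdist eta L.
pose G s := expR (eta * (side_loss c s - side_loss c false))
  * (side_mass p f s * expR (- eta * (side_loss c s / (gam + side_mass p f s)))
     + side_mass p f (~~ s))
  * expR (eta * (if false == s then side_loss c s / (gam + side_mass p f s) else 0)).
have excessE x : expR (excess L h x) = G (thr R x <= f).
  by rewrite expR_excess /loss_gap /= !lossE sum_mgf_ltil ltil_sideE thr_ord_max_gt.
under eq_bigr do rewrite excessE.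
rewrite sum_side_mass /G eqxx /= mulr0 expR0 mulr1 subrr mulr0 expR0 mul1r gamE.
have mass_ge0 b : 0 <= side_mass p f b by apply: sumr_ge0 => k _; exact: pdist_ge0.
have mass1 : side_mass p f true + side_mass p f false = 1.
  rewrite -(pdist_sum1 L) -[in RHS](eq_bigr _ (fun k _ => mulr1 (p k))).
  by rewrite (sum_side_mass p f (fun _ => 1)) !mulr1.
have loss01 b := side_loss_ge0_le1 b c01.
exact: two_cell_mgf_le eta01 (mass_ge0 true) (mass_ge0 false) mass1 (loss01 true) (loss01 false).
Qed.

Lemma loss_gapE e : admissible e ->
  (1 + lam) * loss_gap e = ind R (e.1.1.2 < thr R e.2) - 1
    + lam * (ind R (thr R e.2 <= e.1.1.2) * e.1.2 - alpha * ind R (thr R e.2 <= e.1.1.2)).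
Proof.
move=> /andP[/andP[_ f1] _]; rewrite /loss_gap !lossE thr_ord_max_gt // ltNge /ind /side_loss.
have lam0 := lam_ge0; by case: (_ <= _); rewrite /=; field; rewrite gt_eqF //; lra.
Qed.

Lemma loss_gap_sumE s : all admissible s ->
  (1 + lam) * \sum_(e <- s) loss_gap e = \sum_(e <- s) ind R (e.1.1.2 < thr R e.2) - (size s)%:R
    + lam * \sum_(e <- s)
              (ind R (thr R e.2 <= e.1.1.2) * e.1.2 - alpha * ind R (thr R e.2 <= e.1.1.2)).
Proof.
elim: s => [|e s IH] /=; first by rewrite !big_nil; lra.
by case/andP=> adm_e /IH {}IH; rewrite !big_cons mulrDr IH loss_gapE // -natr1; lra.
Qed.

Lemma loss_gap_le1 e : admissible e -> loss_gap e <= 1.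
Proof.
move=> /andP[_ c01]; rewrite /loss_gap !lossE.
have /andP[_ le1] := side_loss_ge0_le1 (thr R e.2 <= e.1.1.2) c01.
by have /andP[ge0 _] := side_loss_ge0_le1 (thr R (@ord_max n) <= e.1.1.2) c01; lra.
Qed.

Lemma sum_loss_gap_le_size s : all admissible s -> \sum_(e <- s) loss_gap e <= (size s)%:R.
Proof.
elim: s => [|e s IH] /=; first by rewrite big_nil.
case/andP=> adm_e /IH IHs; rewrite big_cons -natr1 addrC.
exact: lerD IHs (loss_gap_le1 adm_e).
Qed.

Lemma loss_gap_whp (T : nat) (delta : R) (P : pred (T.-tuple 'I_n.+1)) :
  0 < eta -> gam = eta / 2 -> 0 < delta <= 1 ->
  (forall t : T.-tuple 'I_n.+1, eta * \sum_(e <- traj lam alpha eta gam adv t) loss_gap e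
      <= ln n.+1%:R + 2 * eta ^+ 2 * T%:R + ln delta^-1 -> P t) ->
  1 - delta <= \sum_(t | P t) seq_prob lam alpha eta gam adv t.
Proof.
move=> eta0 gamE /andP[delta0 delta1] good_P.
have [eta1|eta1] := lerP eta 1.
  apply: (markov_finite
    (Z := fun t : T.-tuple 'I_n.+1 => expR (excess_sum (fun=> 0) [::] t - T%:R * (2 * eta ^+ 2)))).
  - by move=> t; exact: run_prob_ge0.
  - by move=> t; exact: expR_ge0.
  - exact: sum_run_prob.
  - by apply: mean_expR_excess_sum_le1 => L h; apply: excess_mgf_le; rewrite ?eta0.
  - exact: delta0.
  move=> t; rewrite -ltr_pdivlMl // mulr1 -[delta^-1]lnK ?posrE ?invr_gt0 // ltr_expR => ex_lt.
  by apply: good_P; have := loss_gap_le_excess_sum (fun=> 0) [::] t; rewrite potential0; lra.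
have all_P t : P t.
  apply: good_P; have := sum_loss_gap_le_size (exaul_run_admissible (fun=> 0) [::] t).
  rewrite size_exaul_run size_tuple -(ler_pM2l eta0) => /le_trans -> //.
  have : 0 <= ln delta^-1 by apply: ln_ge0; rewrite invf_ge1.
  have : eta * T%:R <= eta ^+ 2 * T%:R by rewrite ler_wpM2r // expr2 ler_peMl // ltW.
  have : 0 <= eta ^+ 2 * T%:R by rewrite mulr_ge0 ?sqr_ge0.
  have : 0 <= ln n.+1%:R :> R by apply: ln_ge0; rewrite ler1n.
  lra.
under eq_bigl do rewrite all_P.
by rewrite sum_run_prob; lra.
Qed.

End ExaulRun.

Lemma regret_rate (R : realType) (T lam eta lnH L1 L2 F I S : R) :
  0 < T -> 0 < lam -> 0 < eta -> lnH = eta ^+ 2 * T -> L1 <= L2 -> 0 <= L2 ->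
  (1 + lam) * S = I - T + lam * F -> eta * S <= lnH + 2 * eta ^+ 2 * T + L1 ->
  F / T <= (1 - T^-1 * I) / lam + (1 + lam^-1) * (4 * eta + (T^-1 + (eta * T)^-1) * L2).
Proof.
move=> T0 lam0 eta0 lnHE L12 L2_0 gapE gap_le.
set K := 4 * eta + _.
have S_le : S <= T * K.
  rewrite -(ler_pM2l eta0); have -> : eta * (T * K) = 4 * (eta ^+ 2 * T) + eta * L2 + L2.
    by rewrite /K; field; rewrite !gt_eqF.
  have := mulr_ge0 (ltW eta0) L2_0; have := mulr_ge0 (sqr_ge0 eta) (ltW T0); lra.
have -> : F = ((1 + lam) * S - I + T) / lam by rewrite gapE; field; rewrite gt_eqF.
rewrite -subr_ge0.
have -> : (1 - T^-1 * I) / lam + (1 + lam^-1) * K - ((1 + lam) * S - I + T) / lam / T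
    = (1 + lam) * (T * K - S) / (lam * T) by field; rewrite !gt_eqF.
by rewrite divr_ge0 ?mulr_ge0 ?subr_ge0 // ltW //; lra.
Qed.

Theorem theorem1 (R : realType) (T H : nat) (alpha delta : R)
  (adv : seq 'I_H -> R * R) :
  (0 < T)%N -> (2 <= H)%N -> 0 < alpha < 1 -> 0 < delta < 1 ->
  (forall h : seq 'I_H, (0 <= (adv h).1 < 1) && (0 <= (adv h).2 <= 1)) ->
  let lam := Num.sqrt (T%:R) in
  let eta := Num.sqrt (ln (H%:R) / T%:R) in
  let gam := eta / 2 in
  1 - delta <=
  \sum_(taus : T.-tuple 'I_H |
          fdr_regret lam alpha eta gam adv taus / T%:R <=
          (1 - ineff T lam alpha eta gam adv taus) / Num.sqrt (T%:R)
          + (1 + (Num.sqrt (T%:R))^-1) *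
            (4 * Num.sqrt (ln (H%:R) / T%:R)
             + ((T%:R)^-1 + Num.sqrt ((T%:R * ln (H%:R))^-1)) * ln (2 / delta)))
    seq_prob lam alpha eta gam adv taus.
Proof.
move=> T0 H2 /andP[al0 al1] /andP[d0 d1]; case: H adv H2 => [|n] adv H2 // hadv; cbv zeta.
set lam := Num.sqrt T%:R; set eta := Num.sqrt (ln n.+1%:R / T%:R).
have T_gt0 : 0 < T%:R :> R by rewrite ltr0n.
have lnH_gt0 : 0 < ln n.+1%:R :> R by rewrite ln_gt0 // ltr1n.
have lam0 : 0 < lam by rewrite sqrtr_gt0.
have eta0 : 0 < eta by rewrite sqrtr_gt0 divr_gt0.
have lnHE : ln n.+1%:R = eta ^+ 2 * T%:R by rewrite sqr_sqrtr ?divfK ?gt_eqF // divr_ge0 // ltW.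
have -> : Num.sqrt ((T%:R * ln n.+1%:R)^-1) = (eta * T%:R)^-1.
  rewrite lnHE mulrCA -expr2 -exprMn -exprVn sqrtr_sqr ger0_norm //.
  by rewrite invr_ge0 mulr_ge0 // ltW.
have al01 : 0 <= alpha <= 1 by rewrite (ltW al0) (ltW al1).
have d01 : 0 < delta <= 1 by rewrite d0 (ltW d1).
apply: (loss_gap_whp H2 (ltW lam0) al01 hadv eta0 erefl d01) => t gap_le.
have := loss_gap_sumE alpha H2 (ltW lam0)
  (exaul_run_admissible lam alpha eta (eta / 2) hadv (fun=> 0) [::] t).
rewrite size_exaul_run size_tuple => gapE.
apply: regret_rate T_gt0 lam0 eta0 lnHE _ _ gapE gap_le.
- by rewrite ler_ln ?posrE ?invr_gt0 ?divr_gt0 // ler_pdivlMr // mulVf ?gt_eqF //; lra.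
- by apply: ln_ge0; rewrite ler_pdivlMr // mul1r; lra.
Qed.
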